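(* Let $J$ be a simple current of $\mathcal{A}$, $\psi\in\{0,1\}$, and let $\langle p,q\rangle$, $\langle p',q'\rangle$ be off-diagonal fields of $\mathcal{A}_{\rm perm}$. Then $$N_{(J,\psi)\langle p,q\rangle}^{\phantom{(J,\psi)\langle p,q\rangle}\langle p',q'\rangle}=N_{Jp}^{\ \ p'}N_{Jq}^{\ \ q'}+N_{Jp}^{\ \ q'}N_{Jq}^{\ \ p'}.$$ Consequently, if moreover $J$ has order two ($J\cdot J=0$), then $\langle p,q\rangle$ is a fixed point of $(J,\psi)$ (i.e. $N_{(J,\psi)\langle p,q\rangle}^{\phantom{(J,\psi)\langle p,q\rangle}\langle p,q\rangle}=1$), for either value of $\psi$, if and only if either $Jp=p$ and $Jq=q$, or $Jp=q$.
   Context: Let $\mathcal{A}$ be a unitary rational conformal field theory with finite set of primary fields $I$, identity $0\in I$, central charge $c$, conformal weights $h_i$, and modular matrices $S$ (symmetric, unitary, with $S_{0i}\ge S_{00}>0$) and $T=\mathrm{diag}(e^{2\pi i(h_i-c/24)})$; put $P=T^{1/2}ST^{2}ST^{1/2}$. Fusion coefficients of $\mathcal{A}$ are $N_{ij}^{\ \ k}=\sum_{m\in I}S_{im}S_{jm}\overline{S_{km}}/S_{0m}$ (non-negative integers). A simple current $J$ of $\mathcal{A}$ is a field with $S_{J0}=S_{00}$; for each $i$ there is then a unique field $Ji$ with $N_{Ji}^{\ \ k}=\delta_{k,Ji}$. The $\mathbb{Z}_2$ permutation orbifold $\mathcal{A}_{\rm perm}$ has primaries: diagonal $(i,\psi)$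 ($i\in I$, $\psi\in\{0,1\}$), off-diagonal $\langle i,j\rangle$ (unordered pairs $i\neq j$), twisted $\widehat{(i,\psi)}$; identity $(0,0)$; modular matrix $S^{BHS}$ given by $S^{BHS}_{\langle i,j\rangle\langle p,q\rangle}=S_{ip}S_{jq}+S_{iq}S_{jp}$, $S^{BHS}_{\langle i,j\rangle(p,\psi)}=S_{ip}S_{jp}$, $S^{BHS}_{\langle i,j\rangle\widehat{(p,\psi)}}=0$, $S^{BHS}_{(i,\psi)(j,\chi)}=\tfrac12 S_{ij}^2$, $S^{BHS}_{(i,\psi)\widehat{(p,\chi)}}=\tfrac12 e^{i\pi\psi}S_{ip}$, $S^{BHS}_{\widehat{(p,\psi)}\widehat{(q,\chi)}}=\tfrac12 e^{i\pi(\psi+\chi)}P_{pq}$ (and symmetric). Fusion coefficients of $\mathcal{A}_{\rm perm}$ are defined by the Verlinde formula $N_{AB}^{\ \ C}=\sum_{N}S^{BHS}_{AN}S^{BHS}_{BN}\overline{S^{BHS}_{CN}}/S^{BHS}_{(0,0)N}$, the sum running over all primaries $N$ of $\mathcal{A}_{\rm perm}$. *)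

From HB Require Import structures.
From mathcomp Require Import all_boot all_order all_algebra.
Set Implicit Arguments. Unset Strict Implicit. Unset Printing Implicit Defensive.
Import Order.TTheory GRing.Theory Num.Theory.
Local Open Scope ring_scope.

Section RCFT.
Variables (C : numClosedFieldType) (I : finType) (i0 : I).
(* S : the modular S-matrix of A; t : the diagonal of T^(1/2), i.e.
   t i = exp(i pi (h_i - c/24)), so that T = diag (t i ^+ 2). *)
Variables (S : I -> I -> C) (t : I -> C).

(* Fusion coefficients of A (Verlinde formula). *)
Definition fusion (i j k : I) : C :=
  \sum_(m : I) S i m * S j m * (S k m)^* / S i0 m.

Definition rcft_data : Prop :=
  (forall i j, S i j = S j i) /\
  (forall i j, \sum_(m : I) S i m * (S j m)^* = (i == j)%:R) /\
  0 < S i0 i0 /\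
  (forall i, S i0 i0 <= S i0 i) /\
  (forall i, `|t i| = 1) /\
  (forall i j k, exists n : nat, fusion i j k = n%:R).

Definition simple_current (J : I) : Prop := S J i0 = S i0 i0.

Definition Jact (J i : I) : I := odflt i [pick k | fusion J i k == 1].

(* P = T^(1/2) S T^2 S T^(1/2) *)
Definition Pmat (p q : I) : C :=
  t p * (\sum_(m : I) S p m * t m ^+ 4 * S m q) * t q.

(* Primaries of the Z2 permutation orbifold.  Off-diagonal fields <i,j>
   (unordered, i <> j) are represented by the 2-element set [set i; j]. *)
Inductive pfield :=
  | PDiag of I & bool
  | POff of {set I}
  | PTw of I & bool.

Definition el1 (A : {set I}) : I := nth i0 (enum A) 0.
Definition el2 (A : {set I}) : I := nth i0 (enum A) 1.

Definition sgnb (b : bool) : C := (-1) ^+ b.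

Definition Sperm (X Y : pfield) : C :=
  match X, Y with
  | POff A, POff B =>
      S (el1 A) (el1 B) * S (el2 A) (el2 B) + S (el1 A) (el2 B) * S (el2 A) (el1 B)
  | POff A, PDiag p _ | PDiag p _, POff A => S (el1 A) p * S (el2 A) p
  | POff _, PTw _ _ | PTw _ _, POff _ => 0
  | PDiag i _, PDiag j _ => 2^-1 * S i j ^+ 2
  | PDiag i psi, PTw p _ | PTw p _, PDiag i psi => 2^-1 * sgnb psi * S i p
  | PTw p psi, PTw q chi => 2^-1 * sgnb psi * sgnb chi * Pmat p q
  end.

Definition sum_pfields (F : pfield -> C) : C :=
  \sum_(i : I) \sum_(psi : bool) F (PDiag i psi)
  + \sum_(A : {set I} | #|A| == 2%N) F (POff A)
  + \sum_(p : I) \sum_(psi : bool) F (PTw p psi).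

Definition fusion_perm (X Y Z : pfield) : C :=
  sum_pfields (fun N => Sperm X N * Sperm Y N * (Sperm Z N)^* / Sperm (PDiag i0 false) N).

End RCFT.

From HB Require Import structures.
From mathcomp Require Import all_boot all_order all_algebra.
From mathcomp Require Import ring zify.
Set Implicit Arguments. Unset Strict Implicit. Unset Printing Implicit Defensive.
Import Order.TTheory GRing.Theory Num.Theory.
Local Open Scope ring_scope.

(* In the Verlinde sum for
      N_{(J,psi)<p,q>}^{<p',q'>} the twisted fields contribute nothing, each
      diagonal field (a,chi) contributes v_{pp'}(a) v_{qq'}(a), and each
      off-diagonal field <a,b> contributes a symmetric expression F(a,b) built
      from the Verlinde terms v_{xy}(a) = S_Ja S_xa conj(S_ya) / S_0a.  Since
      F(a,a) is twice the total diagonal contribution at a, twice the orbifold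
      sum is the full double sum over (a,b) in I x I, which factorises into
      2 (N_{Jp}^{p'} N_{Jq}^{q'} + N_{Jp}^{q'} N_{Jq}^{p'}).
   2. Simple currents act by permutations.  The row (N_{Jp}^k)_k is a
      nonnegative eigen-row for the eigenvalues S_Jm/S_0m, with positive
      eigenvector (S_k0)_k of eigenvalue 1; a Perron-Frobenius argument gives
      |S_Jm/S_0m| <= 1, so by unitarity of S the squares of the natural numbers
      N_{Jp}^k sum to at most 1: exactly one of them is 1, namely k = Jp.
      Moreover S_{Jp,m} = (S_Jm/S_0m) S_pm, so J of order two is an involution.
   3. With N_{Jx}^y = [y = Jx] and J an involution, the fusion rule of step 1
      equals 1 exactly in the two cases of the fixed-point criterion. *)

Lemma el12_card2 (I : finType) (i0 : I) (A : {set I}) : #|A| == 2%N ->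
  el1 i0 A != el2 i0 A /\ A = [set el1 i0 A; el2 i0 A].
Proof.
rewrite cardE /el1 /el2.
have := enum_uniq (mem A); have HA := mem_enum (mem A).
case: (enum A) HA => [|x [|y [|z s]]] //= HA.
rewrite andbT inE => Hu _; split => //.
apply/setP => k; rewrite !inE -HA !inE; by [].
Qed.

Lemma set2_eq (I : finType) (a b c d : I) : a != b -> [set a; b] = [set c; d] ->
  (c = a /\ d = b) \/ (c = b /\ d = a).
Proof.
move=> nab E.
have Ha : a \in [set c; d] by rewrite -E !inE eqxx.
have Hb : b \in [set c; d] by rewrite -E !inE eqxx orbT.
rewrite !inE in Ha Hb.
case/orP: Ha => /eqP Ha; case/orP: Hb => /eqP Hb.
- by rewrite Ha Hb eqxx in nab.
- by left.
- by right.
- by rewrite Ha Hb eqxx in nab.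
Qed.

Lemma el12_pair (I : finType) (i0 : I) (p q : I) : p != q ->
  (el1 i0 [set p; q] = p /\ el2 i0 [set p; q] = q) \/
  (el1 i0 [set p; q] = q /\ el2 i0 [set p; q] = p).
Proof.
move=> npq; have card_pq : #|[set p; q]| == 2%N by rewrite cards2 npq.
have [_ E] := el12_card2 i0 card_pq; exact: set2_eq npq E.
Qed.

Lemma sum_unordered_pairs (R : nmodType) (I : finType) (i0 : I) (F : I -> I -> R) :
  (forall a b, F a b = F b a) ->
  (\sum_(A : {set I} | #|A| == 2%N) F (el1 i0 A) (el2 i0 A)) *+ 2
  = \sum_a \sum_(b | a != b) F a b.
Proof.
move=> symF; rewrite pair_big_dep /=.
rewrite (partition_big (fun x : I * I => [set x.1; x.2]) (fun A : {set I} => #|A| == 2%N));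
  last by move=> [x y] /= nxy; rewrite cards2 nxy.
rewrite -sumrMnl; apply: eq_bigr => A HA.
have [ne E] := el12_card2 i0 HA.
move: (el1 i0 A) (el2 i0 A) ne E => e1 e2 ne E; subst A.
rewrite (bigD1 (e1, e2)) /=; last by rewrite ne eqxx.
rewrite (bigD1 (e2, e1)) /=; last first.
  apply/andP; split; first by rewrite eq_sym ne /= setUC.
  by apply/eqP => -[h _]; rewrite h eqxx in ne.
rewrite big1 ?addr0 ?(symF e2 e1) ?mulr2n //.
move=> [x y] /= /andP [/andP [/andP [nxy /eqP Exy] n1] n2].
have [[h1 h2]|[h1 h2]] := set2_eq ne (esym Exy); subst x y.
  by rewrite eqxx in n1.
by rewrite eqxx in n2.
Qed.

Lemma sum_square_by_pairs (R : nmodType) (I : finType) (i0 : I) (F : I -> I -> R) :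
  (forall a b, F a b = F b a) ->
  \sum_a \sum_b F a b
  = \sum_a F a a + (\sum_(A : {set I} | #|A| == 2%N) F (el1 i0 A) (el2 i0 A)) *+ 2.
Proof.
move=> symF; rewrite sum_unordered_pairs // -big_split /=.
apply: eq_bigr => a _; rewrite (bigD1 a) //=.
by congr (_ + _); apply: eq_bigl => b; rewrite eq_sym.
Qed.

Lemma sum_product (R : pzSemiRingType) (I : finType) (f h : I -> R) :
  \sum_a \sum_b f a * h b = (\sum_a f a) * (\sum_b h b).
Proof. by rewrite mulr_suml; apply: eq_bigr => a _; rewrite mulr_sumr. Qed.

Section OrbifoldFusion.
Variables (C : numClosedFieldType) (I : finType) (i0 : I) (S : I -> I -> C) (t : I -> C).
Hypothesis S_sym : forall i j, S i j = S j i.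

Definition verlinde_term (J x y a : I) : C := S J a * S x a * (S y a)^* / S i0 a.

(* The contribution of the off-diagonal field <a,b> to the orbifold Verlinde
   sum for N_{(J,psi)<x1,x2>}^{<y1,y2>}; it is symmetric in (a,b). *)
Definition pair_term (J x1 x2 y1 y2 a b : I) : C :=
  let v := verlinde_term J in
  v x1 y1 a * v x2 y2 b + v x1 y2 a * v x2 y1 b
  + v x2 y1 a * v x1 y2 b + v x2 y2 a * v x1 y1 b.

Lemma fusion_verlinde_term J x y : fusion i0 S J x y = \sum_a verlinde_term J x y a.
Proof. by []. Qed.

(* Contribution of a diagonal field (i,chi): the factors 1/2 cancel. *)
Lemma diag_summand J psi A B i chi :
  let x1 := el1 i0 A in let x2 := el2 i0 A in
  let y1 := el1 i0 B in let y2 := el2 i0 B in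
  Sperm i0 S t (PDiag J psi) (PDiag i chi) * Sperm i0 S t (POff A) (PDiag i chi)
    * (Sperm i0 S t (POff B) (PDiag i chi))^* / Sperm i0 S t (PDiag i0 false) (PDiag i chi)
  = verlinde_term J x1 y1 i * verlinde_term J x2 y2 i.
Proof.
move=> x1 x2 y1 y2 /=; rewrite /verlinde_term invfM invrK rmorphM /=.
transitivity ((2^-1 * 2) * (S J i ^+ 2 * (S x1 i * S x2 i) * ((S y1 i)^* * (S y2 i)^*)
   * (S i0 i ^+ 2)^-1)); first by ring.
by rewrite mulVf ?pnatr_eq0 // mul1r -exprVn; ring.
Qed.

Lemma off_summand J psi A B D :
  Sperm i0 S t (PDiag J psi) (POff D) * Sperm i0 S t (POff A) (POff D)
    * (Sperm i0 S t (POff B) (POff D))^* / Sperm i0 S t (PDiag i0 false) (POff D)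
  = pair_term J (el1 i0 A) (el2 i0 A) (el1 i0 B) (el2 i0 B) (el1 i0 D) (el2 i0 D).
Proof.
rewrite /pair_term /verlinde_term /=.
set a := el1 i0 D; set b := el2 i0 D.
rewrite (S_sym a J) (S_sym b J) (S_sym a i0) (S_sym b i0).
rewrite rmorphD !rmorphM invfM /=; ring.
Qed.

Lemma fusion_perm_diag_off J psi A B :
  let x1 := el1 i0 A in let x2 := el2 i0 A in
  let y1 := el1 i0 B in let y2 := el2 i0 B in
  fusion_perm i0 S t (PDiag J psi) (POff A) (POff B)
  = fusion i0 S J x1 y1 * fusion i0 S J x2 y2 + fusion i0 S J x1 y2 * fusion i0 S J x2 y1.
Proof.
move=> x1 x2 y1 y2; set F := pair_term J x1 x2 y1 y2.
have F_sym a b : F a b = F b a by rewrite /F /pair_term; ring.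
(* On the diagonal, F is twice the contribution of the fields (a,0), (a,1). *)
have F_diag a : F a a
    = 2 * (verlinde_term J x1 y1 a * verlinde_term J x2 y2 a
         + verlinde_term J x1 y1 a * verlinde_term J x2 y2 a).
  by rewrite /F /pair_term /verlinde_term; ring.
have orbifold_sum : fusion_perm i0 S t (PDiag J psi) (POff A) (POff B)
    = \sum_i (verlinde_term J x1 y1 i * verlinde_term J x2 y2 i
            + verlinde_term J x1 y1 i * verlinde_term J x2 y2 i)
      + \sum_(D : {set I} | #|D| == 2%N) F (el1 i0 D) (el2 i0 D).
  rewrite /fusion_perm /sum_pfields /= [X in _ + X]big1 ?addr0; last first.
    by move=> p _; rewrite big1 // => chi _; rewrite !mulr0 !mul0r.
  congr (_ + _); first by apply: eq_bigr => i _; rewrite big_bool /= !diag_summand.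
  by apply: eq_bigr => D _; rewrite off_summand.
have double_sum : \sum_a \sum_b F a b
    = 2 * (fusion i0 S J x1 y1 * fusion i0 S J x2 y2
           + fusion i0 S J x1 y2 * fusion i0 S J x2 y1).
  rewrite /F /pair_term /=; under eq_bigr do rewrite !big_split /=.
  by rewrite !big_split /= !sum_product !fusion_verlinde_term; ring.
have two_neq0 : (2 : C) != 0 by rewrite pnatr_eq0.
apply: (mulfI two_neq0); rewrite -double_sum (sum_square_by_pairs i0 F_sym) orbifold_sum.
under [in RHS]eq_bigr do rewrite F_diag.
by rewrite -mulr_sumr mulr2n; ring.
Qed.

Lemma fusion_perm_diag_pair J psi p q p' q' : p != q -> p' != q' ->
  fusion_perm i0 S t (PDiag J psi) (POff [set p; q]) (POff [set p'; q'])
  = fusion i0 S J p p' * fusion i0 S J q q' + fusion i0 S J p q' * fusion i0 S J q p'.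
Proof.
move=> npq npq'; rewrite fusion_perm_diag_off.
have [[-> ->]|[-> ->]] := el12_pair i0 npq; have [[-> ->]|[-> ->]] := el12_pair i0 npq'.
- by [].
- by rewrite addrC.
- by rewrite addrC; congr (_ + _); exact: mulrC.
- by congr (_ + _); exact: mulrC.
Qed.

End OrbifoldFusion.

Lemma exists_argmax (R : numDomainType) (I : finType) (i : I) (f : I -> R) :
  (forall x, f x \is Num.real) -> exists k, forall j, f j <= f k.
Proof.
move=> f_real.
suff [k Hk] : exists k, forall j, j \in enum I -> f j <= f k.
  by exists k => j; apply: Hk; rewrite mem_enum.
elim: (enum I) => [|x s [k IH]]; first by exists i.
case/orP: (real_leVge (f_real x) (f_real k)) => Hxk.
- by exists k => j; rewrite inE => /orP [/eqP -> //|]; exact: IH.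
- by exists x => j; rewrite inE => /orP [/eqP -> //|js]; exact: le_trans (IH j js) Hxk.
Qed.

(* Perron-Frobenius bound: if a nonnegative matrix N fixes a positive vector d,
   every eigenvalue of N has modulus at most 1.  Compare |x| with its best
   multiple of d at a coordinate k maximising |x_k|/d_k. *)
Lemma nonneg_eigenvalue_bound (R : numFieldType) (I : finType) (N : I -> I -> R)
    (d x : I -> R) (lambda : R) (k0 : I) :
  (forall k j, 0 <= N k j) -> (forall k, 0 < d k) ->
  (forall k, \sum_j N k j * d j = d k) ->
  (forall k, \sum_j N k j * x j = lambda * x k) -> x k0 != 0 ->
  `|lambda| <= 1.
Proof.
move=> N_ge0 d_gt0 Nd Nx xk0.
pose r k := `|x k| / d k.
have [k r_max] := @exists_argmax R I k0 r
  (fun j => ger0_real (divr_ge0 (normr_ge0 _) (ltW (d_gt0 j)))).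
have x_le j : `|x j| <= r k * d j by rewrite -ler_pdivrMr //; exact: r_max.
have xk_gt0 : 0 < `|x k|.
  have : 0 < r k * d k0 by apply: lt_le_trans (x_le k0); rewrite normr_gt0.
  by rewrite pmulr_lgt0 // /r pmulr_lgt0 // invr_gt0.
have key : `|lambda| * `|x k| <= `|x k|.
  rewrite -normrM -Nx; apply: le_trans (ler_norm_sum _ _ _) _.
  apply: (@le_trans _ _ (\sum_j N k j * (r k * d j))).
    apply: ler_sum => j _; rewrite normrM ger0_norm //.
    exact: ler_wpM2l (x_le j).
  rewrite (eq_bigr (fun j => r k * (N k j * d j))) => [|j _]; last by ring.
  by rewrite -mulr_sumr Nd /r divfK // lt0r_neq0.
by rewrite -ler_pdivlMr // divff ?lt0r_neq0 in key.
Qed.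

Lemma unitary_isometry (R : numClosedFieldType) (I : finType) (S : I -> I -> R) (a : I -> R) :
  (forall i j, \sum_m S i m * (S j m)^* = (i == j)%:R) ->
  \sum_m (\sum_j a j * S j m) * (\sum_j a j * S j m)^* = \sum_j a j * (a j)^*.
Proof.
move=> S_unitary.
have inner j j' : \sum_m a j * S j m * (a j' * S j' m)^* = a j * (a j')^* * (j == j')%:R.
  by rewrite -S_unitary mulr_sumr; apply: eq_bigr => m _; rewrite rmorphM /=; ring.
under eq_bigr do rewrite rmorph_sum /= -sum_product.
rewrite exchange_big; apply: eq_bigr => j _; rewrite exchange_big /=.
under eq_bigr do rewrite inner.
rewrite (bigD1 j) //= eqxx mulr1 big1 ?addr0 // => j' nj.
by rewrite eq_sym (negbTE nj) mulr0.
Qed.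

Lemma natural_unit_vector (R : numDomainType) (I : finType) (a : I -> R) (j0 : I) :
  (forall k, exists n : nat, a k = n%:R) -> \sum_k a k ^+ 2 <= 1 -> a j0 != 0 ->
  a j0 = 1 /\ forall k, k != j0 -> a k = 0.
Proof.
move=> a_nat sq_le1 a_j0.
have sq_ge0 i : 0 <= a i ^+ 2 by have [n ->] := a_nat i; exact: exprn_ge0 (ler0n _ _).
have [n0 E0] := a_nat j0; rewrite E0 pnatr_eq0 in a_j0.
have pair_le1 k : k != j0 -> a j0 ^+ 2 + a k ^+ 2 <= 1.
  move=> nk; apply: le_trans sq_le1; rewrite (bigD1 j0) //= lerD2l (bigD1 k) //= lerDl.
  exact: sumr_ge0.
split => [|k nk].
  have : a j0 ^+ 2 <= 1.
    by apply: le_trans sq_le1; rewrite (bigD1 j0) //= lerDl; exact: sumr_ge0.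
  by rewrite E0 -natrX lern1 => n0_le; suff -> : n0 = 1%N by []; nia.
have [n En] := a_nat k; move: (pair_le1 k nk).
by rewrite E0 En -!natrX -natrD lern1 => n_le; suff -> : n = 0%N by []; nia.
Qed.

Lemma involution_pair_fixed (R : nzRingType) (I : eqType) (sigma : I -> I) (p q : I) :
  involutive sigma -> p != q ->
  ((p == sigma p)%:R * (q == sigma q)%:R + (q == sigma p)%:R * (p == sigma q)%:R = 1 :> R)
  <-> (sigma p = p /\ sigma q = q) \/ sigma p = q.
Proof.
move=> sigmaK npq; have one_neq0 : (1 : R) <> 0 by apply/eqP; rewrite oner_eq0.
have [Epq|npq'] := eqVneq (sigma p) q.
  have Eqp : sigma q = p by rewrite -Epq sigmaK.
  by rewrite Epq Eqp (negbTE npq) mul0r add0r !eqxx mulr1; split => _; [right|].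
rewrite mul0r addr0.
have [Ep|np] := eqVneq p (sigma p); have [Eq|nq] := eqVneq q (sigma q);
  rewrite ?mul1r ?mul0r ?mulr0.
- by split => _ //; left.
- by split=> [/esym/one_neq0 //|[[_ /esym/eqP]|/eqP]]; rewrite ?(negbTE nq) ?(negbTE npq').
- by split=> [/esym/one_neq0 //|[[/esym/eqP]|/eqP]]; rewrite ?(negbTE np) ?(negbTE npq').
- by split=> [/esym/one_neq0 //|[[/esym/eqP]|/eqP]]; rewrite ?(negbTE np) ?(negbTE npq').
Qed.

Section SimpleCurrents.
Variables (C : numClosedFieldType) (I : finType) (i0 : I) (S : I -> I -> C) (t : I -> C).
Hypothesis rcft : rcft_data i0 S t.

Let N := fusion i0 S.

Lemma S_symmetric i j : S i j = S j i.
Proof. by case: rcft. Qed.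

Lemma S_unitary i j : \sum_m S i m * (S j m)^* = (i == j)%:R.
Proof. by case: rcft => _ []. Qed.

Lemma qdim_pos m : 0 < S i0 m.
Proof. by case: rcft => _ [_ [S00 [S0_min _]]]; exact: lt_le_trans S00 (S0_min m). Qed.

Lemma fusion_natural J k j : exists n : nat, N J k j = n%:R.
Proof. by case: rcft => _ [_ [_ [_ [_ Hn]]]]; exact: Hn. Qed.

Lemma fusion_ge0 J k j : 0 <= N J k j.
Proof. by have [n ->] := fusion_natural J k j; exact: ler0n. Qed.

Lemma fusion_eigen J k m : \sum_j N J k j * S j m = S J m / S i0 m * S k m.
Proof.
transitivity (\sum_m' (S J m' * S k m' / S i0 m') * \sum_j S m j * (S m' j)^*).
  rewrite /N /fusion; under eq_bigr do rewrite mulr_suml.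
  rewrite exchange_big; apply: eq_bigr => m' _; rewrite mulr_sumr; apply: eq_bigr => j _.
  by rewrite (S_symmetric m j) (S_symmetric m' j); ring.
under eq_bigr do rewrite S_unitary.
rewrite (bigD1 m) //= eqxx mulr1 big1 ?addr0; first by ring.
by move=> m' nm; rewrite eq_sym (negbTE nm) mulr0.
Qed.

Section OneCurrent.
Variable J : I.
Hypothesis J_simple : simple_current i0 S J.

(* For a simple current the eigenvalue at m = 0 is 1. *)
Lemma simple_current_row_sum p : \sum_k N J p k * S k i0 = S p i0.
Proof.
rewrite fusion_eigen J_simple mulfV ?mul1r //; exact/lt0r_neq0/qdim_pos.
Qed.

(* The eigenvalues of fusion with a simple current have modulus at most 1;
   every column of S is nonzero since S is unitary. *)
Lemma simple_current_eigenvalue_bound m : `|S J m / S i0 m| <= 1.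
Proof.
have [k Skm] : exists k, S k m != 0.
  apply/existsP; apply: contraT; rewrite negb_exists => /forallP Sm0.
  have := S_unitary m m; rewrite eqxx big1 => [/eqP|j _]; first by rewrite eq_sym oner_eq0.
  by rewrite S_symmetric (eqP (negbNE (Sm0 j))) mul0r.
apply: (@nonneg_eigenvalue_bound _ _ (N J) (S ^~ i0) (S ^~ m) _ k) => //.
- exact: fusion_ge0.
- by move=> i; rewrite S_symmetric; exact: qdim_pos.
- exact: simple_current_row_sum.
- by move=> i; exact: fusion_eigen.
Qed.

(* Hence, by unitarity of S, sum_k (N_{Jp}^k)^2 <= 1. *)
Lemma simple_current_row_sq p : \sum_j N J p j ^+ 2 <= 1.
Proof.
have N_real j : (N J p j)^* = N J p j by have [n ->] := fusion_natural J p j; exact: conjC_nat.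
rewrite (eq_bigr (fun j => N J p j * (N J p j)^*)) => [|j _]; last by rewrite N_real expr2.
rewrite -(unitary_isometry _ S_unitary).
under eq_bigr do rewrite fusion_eigen -normCK.
apply: (@le_trans _ _ (\sum_m `|S p m| ^+ 2)).
  apply: ler_sum => m _; rewrite normrM exprMn ler_piMl ?exprn_ge0 //.
  exact: exprn_ile1 (normr_ge0 _) (simple_current_eigenvalue_bound m).
by under eq_bigr do rewrite normCK; rewrite S_unitary eqxx.
Qed.

Lemma simple_current_fusion p k : N J p k = (k == Jact i0 S J p)%:R.
Proof.
have [j0 Nj0] : exists j, N J p j != 0.
  apply/existsP; apply: contraT; rewrite negb_exists => /forallP N0.
  have := simple_current_row_sum p; rewrite big1 => [/esym/eqP|k' _].
    by rewrite S_symmetric (negbTE (lt0r_neq0 (qdim_pos p))).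
  by rewrite (eqP (negbNE (N0 k'))) mul0r.
have [N1 N0] := natural_unit_vector (fusion_natural J p) (simple_current_row_sq p) Nj0.
have -> : Jact i0 S J p = j0.
  rewrite /Jact -/N; case: pickP => [k' /eqP Nk'|no_one] /=;
    last by move: (no_one j0); rewrite N1 eqxx.
  by apply/eqP; apply: contraT => nk'; move: Nk'; rewrite N0 // => /esym/eqP; rewrite oner_eq0.
by have [->|nk] := eqVneq k j0; [rewrite N1 | rewrite N0].
Qed.

Lemma simple_current_S_shift p m : S (Jact i0 S J p) m = S J m / S i0 m * S p m.
Proof.
rewrite -fusion_eigen; under eq_bigr do rewrite simple_current_fusion.
rewrite (bigD1 (Jact i0 S J p)) //= eqxx mul1r big1 ?addr0 // => j nj.
by rewrite (negbTE nj) mul0r.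
Qed.

End OneCurrent.

Lemma S_row_inj a b : (forall m, S a m = S b m) -> a = b.
Proof.
move=> Eab; have := S_unitary a b; under eq_bigr do rewrite -Eab.
by rewrite S_unitary eqxx; have [//|_ /eqP] := eqVneq a b; rewrite eqr_nat.
Qed.

(* A simple current of order two acts by an involution: its eigenvalues
   square to 1. *)
Lemma order_two_involutive J : simple_current i0 S J -> Jact i0 S J J = i0 ->
  involutive (Jact i0 S J).
Proof.
move=> J_simple JJ p; apply: S_row_inj => m.
have S0m : S i0 m != 0 by exact/lt0r_neq0/qdim_pos.
have sq1 : (S J m / S i0 m) * (S J m / S i0 m) = 1.
  have S0_shift := simple_current_S_shift J_simple J m; rewrite JJ in S0_shift.
  by apply: (mulIf S0m); rewrite mul1r [in RHS]S0_shift; field.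
by rewrite !(simple_current_S_shift J_simple) mulrA sq1 mul1r.
Qed.

End SimpleCurrents.

Theorem mainTheorem3 (C : numClosedFieldType) (I : finType) (i0 : I)
  (S : I -> I -> C) (t : I -> C) :
  rcft_data i0 S t ->
  forall J : I, simple_current i0 S J ->
  (forall (psi : bool) (p q p' q' : I), p != q -> p' != q' ->
     fusion_perm i0 S t (PDiag J psi) (POff [set p; q]) (POff [set p'; q'])
     = fusion i0 S J p p' * fusion i0 S J q q'
       + fusion i0 S J p q' * fusion i0 S J q p')
  /\
  (Jact i0 S J J = i0 ->
   forall (psi : bool) (p q : I), p != q ->
     (fusion_perm i0 S t (PDiag J psi) (POff [set p; q]) (POff [set p; q]) = 1
      <-> (Jact i0 S J p = p /\ Jact i0 S J q = q) \/ Jact i0 S J p = q)).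
Proof.
move=> rcft J J_simple.
have fusion_rule := fusion_perm_diag_pair i0 t (S_symmetric rcft) J.
split=> [|JJ psi p q npq]; first exact: fusion_rule.
rewrite fusion_rule // !(simple_current_fusion rcft J_simple).
exact: involution_pair_fixed (order_two_involutive rcft J_simple JJ) npq.
Qed.
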